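(* Let $H_A,H_B$ be finite-dimensional complex Hilbert spaces, $h_{1A},h_{2A}$ subspaces of $H_A$, $h_{1B},h_{2B}$ subspaces of $H_B$, and $h_1=h_{1A}\otimes h_{1B}$, $h_2=h_{2A}\otimes h_{2B}$. Suppose $[\Pi_A(h_{1A}),\Pi_A(h_{2A})]=0$ and $[\Pi_B(h_{1B}),\Pi_B(h_{2B})]=0$. Then for every unit vector $\ket s\in H_A\otimes H_B$, $\bra s\Pi(h_1\vee h_2)\ket s\le \bra s\,\Pi_A(h_{1A})\otimes\Pi_B(h_{1B})\,\ket s+\bra s\,\Pi_A(h_{2A})\otimes\Pi_B(h_{2B})\,\ket s.$
   Context: $\Pi_A(k)$, $\Pi_B(k)$, $\Pi(k)$ denote orthogonal projectors onto a subspace $k$ of $H_A$, $H_B$, $H_A\otimes H_B$ respectively. $h\vee h'=\mathrm{span}(h\cup h')$. For subspaces $k_A\subseteq H_A$, $k_B\subseteq H_B$, $k_A\otimes k_B$ is the subspace spanned by all $\ket a\otimes\ket b$, $\ket a\in k_A$, $\ket b\in k_B$. *)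

From HB Require Import structures.
From mathcomp Require Import all_boot all_order all_algebra.
Set Implicit Arguments. Unset Strict Implicit. Unset Printing Implicit Defensive.
Import Order.TTheory GRing.Theory Num.Theory.
Local Open Scope ring_scope.

(* Finite-dimensional Hilbert spaces H = C^n, vectors are ROW vectors 'rV[C]_n,
   a subspace is the row space of a matrix (mxalgebra convention),
   H_A (x) H_B = C^(m*n), with the pair index (i,j) encoded by mxvec_index. *)

Section Defs.
Variable C : numClosedFieldType.

Definition adjmx m n (A : 'M[C]_(m, n)) : 'M[C]_(n, m) := (map_mx Num.conj A)^T.

(* components of a pair index k : 'I_(m*n), inverse of mxvec_index *)
Definition idx1 m n (k : 'I_(m * n)) : 'I_m :=
  (enum_val (cast_ord (esym (mxvec_cast m n)) k)).1.
Definition idx2 m n (k : 'I_(m * n)) : 'I_n :=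
  (enum_val (cast_ord (esym (mxvec_cast m n)) k)).2.

(* For subspaces given as row spaces
   of U and V, the row space of tensmx U V is U (x) V = span{a (x) b};
   for operators it is the operator tensor product A (x) B. *)
Definition tensmx m1 n1 m2 n2 (A : 'M[C]_(m1, n1)) (B : 'M[C]_(m2, n2))
  : 'M[C]_(m1 * m2, n1 * n2) :=
  \matrix_(i, j) (A (idx1 i) (idx1 j) * B (idx2 i) (idx2 j)).

Definition orth_proj n (U P : 'M[C]_n) : Prop :=
  [/\ P *m P = P, adjmx P = P & (P == U)%MS].

Definition expect n (s : 'rV[C]_n) (M : 'M[C]_n) : C :=
  (s *m M *m adjmx s) 0 0.

Definition unit_vec n (s : 'rV[C]_n) : Prop := (s *m adjmx s) 0 0 = 1.

End Defs.

From HB Require Import structures.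
From mathcomp Require Import all_boot all_order all_algebra.
From mathcomp Require Import ring.
Import Order.TTheory GRing.Theory Num.Theory.
Set Implicit Arguments. Unset Strict Implicit.
Local Open Scope ring_scope.

(* Write Q1 = P1A (x) P1B and Q2 = P2A (x) P2B.  By the mixed
   product rule (A (x) B)(A' (x) B') = AA' (x) BB', each Qi is the orthogonal
   projector onto hiA (x) hiB, and Q1, Q2 commute because the factors do.
   For two commuting orthogonal projectors P, Q onto U, V, the operator
   P + Q - PQ is the orthogonal projector onto U + V; since such projectors
   are unique, P12 = Q1 + Q2 - Q1 Q2.  Finally Q1 Q2 is itself an orthogonal
   projector, so <s|Q1 Q2|s> >= 0, which gives the inequality (for every
   vector s, unit or not). *)

Section Tensor.
Variable C : numClosedFieldType.

Lemma sum_pair_index p q (F : 'I_p -> 'I_q -> C) :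
  \sum_(k < p * q) F (idx1 k) (idx2 k) = \sum_(a < p) \sum_(b < q) F a b.
Proof.
rewrite pair_big /=.
rewrite (reindex (fun k : 'I_(p * q) =>
  enum_val (cast_ord (esym (mxvec_cast p q)) k))) //=.
exists (fun x => cast_ord (mxvec_cast p q) (enum_rank x)) => x _.
  by rewrite enum_valK cast_ordKV.
by rewrite cast_ordK enum_rankK.
Qed.

Lemma tensmx_mul m1 n1 p1 m2 n2 p2 (A : 'M[C]_(m1, n1)) (B : 'M[C]_(m2, n2))
  (A' : 'M[C]_(n1, p1)) (B' : 'M[C]_(n2, p2)) :
  tensmx A B *m tensmx A' B' = tensmx (A *m A') (B *m B').
Proof.
apply/matrixP => i j; rewrite !mxE.
pose F a b := (A (idx1 i) a * B (idx2 i) b) * (A' a (idx1 j) * B' b (idx2 j)).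
transitivity (\sum_k F (idx1 k) (idx2 k)).
  by apply: eq_bigr => k _; rewrite ?mxE /F; ring.
rewrite sum_pair_index big_distrl /=; apply: eq_bigr => a _.
rewrite big_distrr /=; apply: eq_bigr => b _.
by rewrite /F; ring.
Qed.

Lemma tensmx_sub m1 n1 m2 n2 k1 k2 (A : 'M[C]_(m1, n1)) (A' : 'M[C]_(k1, n1))
  (B : 'M[C]_(m2, n2)) (B' : 'M[C]_(k2, n2)) :
  (A <= A')%MS -> (B <= B')%MS -> (tensmx A B <= tensmx A' B')%MS.
Proof. by move=> /submxP[D ->] /submxP[E ->]; rewrite -tensmx_mul submxMl. Qed.

Lemma tensmx_eqmx m1 n1 m2 n2 k1 k2 (A : 'M[C]_(m1, n1)) (A' : 'M[C]_(k1, n1))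
  (B : 'M[C]_(m2, n2)) (B' : 'M[C]_(k2, n2)) :
  (A == A')%MS -> (B == B')%MS -> (tensmx A B == tensmx A' B')%MS.
Proof.
move=> /andP[sAA' sA'A] /andP[sBB' sB'B].
by apply/andP; split; apply: tensmx_sub.
Qed.

Lemma adjmxM m n p (A : 'M[C]_(m, n)) (B : 'M[C]_(n, p)) :
  adjmx (A *m B) = adjmx B *m adjmx A.
Proof. by rewrite /adjmx map_mxM trmx_mul. Qed.

Lemma adjmxB m n (A B : 'M[C]_(m, n)) : adjmx (A - B) = adjmx A - adjmx B.
Proof. by apply/matrixP => i j; rewrite !mxE rmorphB. Qed.

Lemma adjmxD m n (A B : 'M[C]_(m, n)) : adjmx (A + B) = adjmx A + adjmx B.
Proof. by apply/matrixP => i j; rewrite !mxE rmorphD. Qed.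

Lemma adjmx_tens m1 n1 m2 n2 (A : 'M[C]_(m1, n1)) (B : 'M[C]_(m2, n2)) :
  adjmx (tensmx A B) = tensmx (adjmx A) (adjmx B).
Proof. by apply/matrixP => i j; rewrite !mxE rmorphM. Qed.

Lemma expectB n (s : 'rV[C]_n) (A B : 'M[C]_n) :
  expect s (A - B) = expect s A - expect s B.
Proof. by rewrite /expect mulmxBr mulmxBl !mxE. Qed.

Lemma expectD n (s : 'rV[C]_n) (A B : 'M[C]_n) :
  expect s (A + B) = expect s A + expect s B.
Proof. by rewrite /expect mulmxDr mulmxDl mxE. Qed.

End Tensor.

Section Projectors.
Variables (C : numClosedFieldType) (n : nat).
Implicit Types (U V P Q W : 'M[C]_n).

(* If W is self-adjoint and P = P* is fixed by W on the left, it is also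
   fixed on the right (take adjoints). *)
Lemma adj_fix_right P W :
  adjmx P = P -> adjmx W = W -> W *m P = P -> P *m W = P.
Proof. by move=> aP aW WP; rewrite -{1}aP -aW -adjmxM WP aP. Qed.

Lemma orth_proj_unique U P Q : orth_proj U P -> orth_proj U Q -> P = Q.
Proof.
case=> PP aP /andP[sPU sUP]; case=> QQ aQ /andP[sQU sUQ].
have [D eD] : exists D, Q = D *m P by apply/submxP; exact: submx_trans sQU sUP.
have [E eE] : exists E, P = E *m Q by apply/submxP; exact: submx_trans sPU sUQ.
have QP : Q *m P = Q by rewrite {1}eD -mulmxA PP -eD.
have PQ : P *m Q = P by rewrite {1}eE -mulmxA QQ -eE.
by rewrite -aQ -QP adjmxM aP aQ PQ.
Qed.

(* <s|W|s> = |sW|^2 >= 0 for a self-adjoint idempotent W. *)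
Lemma expect_proj_ge0 (s : 'rV[C]_n) W :
  W *m W = W -> adjmx W = W -> 0 <= expect s W.
Proof.
move=> WW aW; rewrite /expect.
have -> : s *m W *m adjmx s = (s *m W) *m adjmx (s *m W).
  by rewrite adjmxM aW mulmxA -(mulmxA s W W) WW.
rewrite mxE; apply: sumr_ge0 => i _; rewrite !mxE; exact: mul_conjC_ge0.
Qed.

Section Commuting.
Variables (P Q : 'M[C]_n).
Hypotheses (PP : P *m P = P) (QQ : Q *m Q = Q).
Hypotheses (aP : adjmx P = P) (aQ : adjmx Q = Q).
Hypothesis PQC : P *m Q = Q *m P.

Lemma commuting_prod_idem : (P *m Q) *m (P *m Q) = P *m Q.
Proof. by rewrite mulmxA -(mulmxA P Q P) -PQC (mulmxA P P Q) PP -mulmxA QQ. Qed.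

Lemma commuting_prod_adj : adjmx (P *m Q) = P *m Q.
Proof. by rewrite adjmxM aP aQ PQC. Qed.

Let R := P + Q - P *m Q.

Let RP : R *m P = P.
Proof.
rewrite /R !mulmxDl mulNmx PP -[Q *m P]PQC -(mulmxA P Q P) -PQC mulmxA PP.
exact: addrK.
Qed.

Let RQ : R *m Q = Q.
Proof. by rewrite /R !mulmxDl mulNmx QQ -mulmxA QQ addrAC subrr add0r. Qed.

Let aR : adjmx R = R.
Proof. by rewrite /R adjmxB adjmxD aP aQ commuting_prod_adj. Qed.

(* P + Q - PQ is the orthogonal projector onto U + V: it is idempotent and
   self-adjoint, its range lies in P + Q, and it fixes P and Q. *)
Lemma commuting_join_proj U V :
  orth_proj U P -> orth_proj V Q -> orth_proj (U + V)%MS (P + Q - P *m Q).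
Proof.
case=> _ _ eqPU; case=> _ _ eqQV; split => //.
  by rewrite -/R {2}/R !mulmxDr mulmxN RP RQ mulmxA RP.
apply/eqmxP/(eqmx_trans _ (adds_eqmx (eqmxP eqPU) (eqmxP eqQV))).
rewrite -/R; apply/eqmxP/andP; split.
  apply: addmx_sub; first exact: addmx_sub (addsmxSl _ _) (addsmxSr _ _).
  by rewrite ((eqmx_opp _).2 _ _).1 (submx_trans (submxMl _ _) (addsmxSr _ _)).
rewrite addsmx_sub -{1}(adj_fix_right aP aR RP) -{1}(adj_fix_right aQ aR RQ).
by rewrite !submxMl.
Qed.

End Commuting.

End Projectors.

Lemma tensmx_orth_proj (C : numClosedFieldType) m n
    (U P : 'M[C]_m) (V Q : 'M[C]_n) :
  orth_proj U P -> orth_proj V Q -> orth_proj (tensmx U V) (tensmx P Q).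
Proof.
case=> PP aP eqPU; case=> QQ aQ eqQV; split.
- by rewrite tensmx_mul PP QQ.
- by rewrite adjmx_tens aP aQ.
- exact: tensmx_eqmx.
Qed.

Theorem mainTheorem4 (C : numClosedFieldType) (m n : nat)
  (h1A h2A : 'M[C]_m) (h1B h2B : 'M[C]_n)
  (P1A P2A : 'M[C]_m) (P1B P2B : 'M[C]_n) (P12 : 'M[C]_(m * n)) :
  orth_proj h1A P1A -> orth_proj h2A P2A ->
  orth_proj h1B P1B -> orth_proj h2B P2B ->
  orth_proj (tensmx h1A h1B + tensmx h2A h2B)%MS P12 ->
  P1A *m P2A = P2A *m P1A ->
  P1B *m P2B = P2B *m P1B ->
  forall s : 'rV[C]_(m * n), unit_vec s ->
    expect s P12 <= expect s (tensmx P1A P1B) + expect s (tensmx P2A P2B).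
Proof.
move=> pr1A pr2A pr1B pr2B pr12 cA cB s _.
have pr1 := tensmx_orth_proj pr1A pr1B; have pr2 := tensmx_orth_proj pr2A pr2B.
have [[Q11 aQ1 _] [Q22 aQ2 _]] := (pr1, pr2).
have cQ : tensmx P1A P1B *m tensmx P2A P2B = tensmx P2A P2B *m tensmx P1A P1B.
  by rewrite !tensmx_mul cA cB.
have -> := orth_proj_unique pr12 (commuting_join_proj Q11 Q22 aQ1 aQ2 cQ pr1 pr2).
rewrite expectB expectD gerBl.
exact: expect_proj_ge0 (commuting_prod_idem Q11 Q22 cQ)
                       (commuting_prod_adj aQ1 aQ2 cQ).
Qed.
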